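(* Let $n\geqslant2$, $\lambda>0$, distinct points $p_1,\ldots,p_M\in\mathbb{Z}^n$ and positive integers $n_1,\ldots,n_M$ be given, let $C=4\pi\sum_{j=1}^Mn_j$, and let $\Omega_0$ be a finite subset of $\mathbb{Z}^n$ containing $\{p_j\}_{j=1}^M$. For any finite subset $\Omega\supset\Omega_0$, the boundary value problem $$\Delta u=\lambda e^u(e^u-1)+4\pi\sum_{j=1}^Mn_j\delta_{p_j}\ \text{ on }\Omega,\qquad u=0\ \text{ on }\delta\Omega$$ has a solution $u_\Omega:\overline\Omega\to\mathbb{R}$ which is maximal among all solutions of this boundary value problem (i.e. $v\leqslant u_\Omega$ on $\overline\Omega$ for every solution $v$) and satisfies $\|u_\Omega\|_{l^2(\Omega)}\leqslant C_0$, where $C_0$ is a constant depending only on $n$, $\lambda$ and $C$.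
   Context: $\mathbb{Z}^n$ is the integer lattice graph with $x\sim y$ iff $\sum_i|x_i-y_i|=1$. For a finite $\Omega\subset\mathbb{Z}^n$, $\delta\Omega=\{y\in\mathbb{Z}^n\setminus\Omega:\exists x\in\Omega,\ y\sim x\}$ and $\overline\Omega=\Omega\cup\delta\Omega$. For $u:\overline\Omega\to\mathbb{R}$ and $x\in\Omega$, $\Delta u(x)=\sum_{y\sim x}(u(y)-u(x))$. $\delta_p$ is the function equal to $1$ at $p$ and $0$ elsewhere. $\|u\|_{l^2(\Omega)}=(\sum_{x\in\Omega}u(x)^2)^{1/2}$. *)

From HB Require Import structures.
From mathcomp Require Import all_boot all_order all_algebra.
From mathcomp Require Import finmap.
From mathcomp Require Import reals sequences exp trigo.
Set Implicit Arguments. Unset Strict Implicit. Unset Printing Implicit Defensive.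
Import Order.TTheory GRing.Theory Num.Theory.
Local Open Scope ring_scope.

Definition pt (n : nat) := {ffun 'I_n -> int}.

Definition adj n (x y : pt n) : bool := (\sum_(i < n) `|x i - y i|%N)%N == 1%N.

Definition vbdry n (Om : {fset pt n}) (y : pt n) : Prop :=
  y \notin Om /\ exists2 x, x \in Om & adj x y.
Definition vclos n (Om : {fset pt n}) (y : pt n) : Prop :=
  y \in Om \/ vbdry Om y.

(* The lattice neighbour x + s e_i. The neighbours of x (points y with adj x y)
   are exactly shift x i 1 and shift x i (-1), i < n. *)
Definition shift n (x : pt n) (i : 'I_n) (s : int) : pt n :=
  [ffun j => if j == i then x j + s else x j].

Definition lap {R : realType} n (u : pt n -> R) (x : pt n) : R :=
  \sum_(i < n) ((u (shift x i 1) - u x) + (u (shift x i (-1)) - u x)).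

Definition dirac {R : realType} n (p x : pt n) : R := if x == p then 1 else 0.

Definition solves {R : realType} n (lam : R) M (p : 'I_M -> pt n) (nj : 'I_M -> nat)
    (Om : {fset pt n}) (u : pt n -> R) : Prop :=
  (forall x, x \in Om ->
     lap u x = lam * expR (u x) * (expR (u x) - 1)
               + 4 * pi * \sum_(j < M) (nj j)%:R * dirac (p j) x)
  /\ (forall y, vbdry Om y -> u y = 0).

Definition l2norm {R : realType} n (Om : {fset pt n}) (u : pt n -> R) : R :=
  Num.sqrt (\sum_(x <- Om) u x ^+ 2).

From HB Require Import structures.
From mathcomp Require Import all_boot all_order all_algebra.
From mathcomp Require Import finmap.
From mathcomp Require Import reals sequences exp trigo.
From mathcomp Require Import ring lra.
Import Order.TTheory GRing.Theory Num.Theory.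
Local Open Scope ring_scope.

(* Below [0] the damped Jacobi step [relax] is monotone, because [t |-> lam t - lam e^t (e^t - 1)]
   is nondecreasing for [t <= 0].  Hence the pointwise supremum of the nonpositive subsolutions
   (there is one: a quadratic barrier truncated to [Om]) is a fixed point of [relax], i.e. a
   solution, and it dominates every solution since solutions are nonpositive by the maximum
   principle.
   For the l^2 bound, summing the equation over a set [A] shows that the outward flux of [u]
   through the boundary of [A] plus the mass of [- lam e^u (e^u - 1)] on [A] is at most [C].
   On sublevel sets this bounds every increment of [u] by [C] and the edge boundary of
   [{u < -1}] by a constant; a discrete isoperimetric inequality in two coordinate directions
   then bounds the size of [{u < -1}], hence the depth of [u] there, while off [{u < -1}] we
   have [u^2 <= - u], which the mass term controls. *)

Set Implicit Arguments.
Unset Strict Implicit.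
Unset Printing Implicit Defensive.

Lemma sumr_delta_uniq (R : pzSemiRingType) (T : eqType) (s : seq T) z (G : T -> R) :
  uniq s -> \sum_(y <- s) (y == z)%:R * G y = (z \in s)%:R * G z.
Proof.
elim: s => [|a s IH] /=; first by rewrite big_nil mul0r.
case/andP=> a_notin_s s_uniq; rewrite big_cons IH // in_cons.
case: (eqVneq a z) => [<-|_] /=; first by rewrite (negbTE a_notin_s) !mul0r addr0.
by rewrite mul0r add0r.
Qed.

Lemma sumr_ge_term (R : numDomainType) (T : eqType) (s : seq T) (F : T -> R) z :
  z \in s -> (forall x, x \in s -> 0 <= F x) -> F z <= \sum_(x <- s) F x.
Proof.
move=> zs F_ge0; rewrite (big_rem z) //= lerDl big_seq.
by apply: sumr_ge0 => x /mem_rem /F_ge0.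
Qed.

Section LatticeSteps.
Variable n : nat.
Implicit Types (x y : pt n) (i j : 'I_n) (d : 'I_n * bool) (S : {fset pt n}).

Lemma shift0 x i : shift x i 0 = x.
Proof. by apply/ffunP => k; rewrite ffunE addr0; case: eqP. Qed.

Lemma shiftD x i (a b : int) : shift (shift x i a) i b = shift x i (a + b).
Proof. by apply/ffunP => k; rewrite !ffunE; case: eqP => // _; rewrite addrA. Qed.

Lemma shift_inj x i : injective (shift x i).
Proof. by move=> a b /(congr1 (fun y : pt n => y i)); rewrite !ffunE eqxx => /addrI. Qed.

Definition step x d : pt n := shift x d.1 (if d.2 then 1 else -1).

Definition flip d : 'I_n * bool := (d.1, ~~ d.2).

Lemma flipK : involutive flip.
Proof. by case=> i b; rewrite /flip negbK. Qed.

Lemma stepK x d : step (step x d) (flip d) = x.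
Proof. by case: d => i []; rewrite /step /= shiftD ?subrr ?addNr shift0. Qed.

Lemma eq_step_flip x y d : (y == step x d) = (x == step y (flip d)).
Proof.
apply/eqP/eqP => [->|->]; first by rewrite stepK.
by rewrite -[X in _ = step _ X]flipK stepK.
Qed.

Lemma adj_step x d : adj x (step x d).
Proof.
rewrite /adj (bigD1 d.1) //= big1 ?addn0 => [|k /negbTE kd]; last by rewrite ffunE kd subrr.
by rewrite ffunE eqxx opprD addNKr; case: d.2.
Qed.

Lemma ray_card S x i K :
  (forall k, (k < K)%N -> shift x i k%:Z \in S) -> (K <= size S)%N.
Proof.
move=> inS; rewrite -(size_iota 0 K) -(size_map (fun k : nat => shift x i k%:Z)).
apply: uniq_leq_size => [|y /mapP[k]]; last by rewrite mem_iota add0n => /inS ? ->.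
by rewrite map_inj_uniq ?iota_uniq // => a b /shift_inj [].
Qed.

Lemma ray_exit S x i : exists K,
  [/\ (K <= size S)%N, shift x i K%:Z \notin S & forall k, (k < K)%N -> shift x i k%:Z \in S].
Proof.
have exK : exists k, shift x i k%:Z \notin S.
  have /allPn[k _ kS] : ~~ all (fun k : nat => shift x i k%:Z \in S) (iota 0 (size S).+1).
    apply/allP => inS; suff: ((size S).+1 <= size S)%N by rewrite ltnn.
    by apply: ray_card => k lt_kS; apply: inS; rewrite mem_iota.
  by exists k.
case: (ex_minnP exK) => K KS minK.
have inS k : (k < K)%N -> shift x i k%:Z \in S.
  by move=> lt_kK; apply/negPn/negP => /minK; rewrite leqNgt lt_kK.
by exists K; split=> //; exact: ray_card inS.
Qed.

Definition exits S i := [seq x <- S | shift x i 1 \notin S].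

Lemma ray_last_exit S x i : x \in S -> exists k : nat, shift x i k%:Z \in exits S i.
Proof.
move=> xS; have [K [_ KS inS]] := ray_exit S x i.
have K_gt0 : (0 < K)%N by case: K KS {inS} => //; rewrite shift0 xS.
exists K.-1; rewrite mem_filter shiftD addrC -intS prednK // KS.
by rewrite inS // prednK.
Qed.

Definition glue i (a b : pt n) : pt n := [ffun k => if k == i then b k else a k].

(* Each [x \in S] is the [glue] of the last points of [S] on its [i]-ray and on its [j]-ray. *)
Lemma size_le_exits_mul S i j :
  i != j -> (size S <= size (exits S i) * size (exits S j))%N.
Proof.
move=> ij; rewrite -(size_allpairs (glue i)).
apply: uniq_leq_size (fset_uniq S) _ => x xS.
have [k ak] := ray_last_exit i xS; have [l bl] := ray_last_exit j xS.
apply/allpairsP; exists (shift x i k%:Z, shift x j l%:Z); split=> //=.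
apply/ffunP => m; rewrite !ffunE.
by case: (eqVneq m i) => [->|_]; rewrite ?(negbTE ij).
Qed.

Definition perimeter S : nat := \sum_(x <- S) \sum_(d : 'I_n * bool) (step x d \notin S).

Lemma size_exits_le S i : (size (exits S i) <= perimeter S)%N.
Proof.
rewrite size_filter -sum1_count big_mkcond /=; apply: leq_sum => x _.
by rewrite (bigD1 (i, true)) //=; case: ifP.
Qed.

Lemma size_le_perimeter_sqr S : (1 < n)%N -> (size S <= perimeter S ^ 2)%N.
Proof.
move=> n_gt1; pose i : 'I_n := Ordinal (ltnW n_gt1); pose j : 'I_n := Ordinal n_gt1.
apply: leq_trans (size_le_exits_mul S (i := i) (j := j) isT) _.
by rewrite expnS expn1 leq_mul ?size_exits_le.
Qed.

End LatticeSteps.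

Section GraphLaplacian.
Variables (R : realType) (n : nat).
Implicit Types (A : {fset pt n}) (u w : pt n -> R) (x : pt n).

Lemma lapE u x : lap u x = \sum_(d : 'I_n * bool) (u (step x d) - u x).
Proof.
rewrite /lap (eq_bigr (fun i => \sum_(b : bool) (u (step x (i, b)) - u x))).
  by rewrite pair_bigA; apply: eq_bigr => -[].
by move=> i _; rewrite big_bool.
Qed.

Lemma sum_dirs_const (c : R) : \sum_(d : 'I_n * bool) c = 2 * n%:R * c.
Proof. by rewrite sumr_const card_prod card_ord card_bool -[c *+ _]mulr_natl natrM; lra. Qed.

Lemma lap_nb u x : lap u x = \sum_(d : 'I_n * bool) u (step x d) - 2 * n%:R * u x.
Proof. by rewrite lapE sumrB sum_dirs_const. Qed.

Lemma ler_lap u w x :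
  u x = w x -> (forall d, u (step x d) <= w (step x d)) -> lap u x <= lap w x.
Proof. by move=> uw le_uw; rewrite !lapE uw; apply: ler_sum => d _; rewrite lerD2r. Qed.

Definition outflow A u x : R :=
  \sum_(d : 'I_n * bool) (step x d \notin A)%:R * (u (step x d) - u x).

(* Each edge inside [A] is counted once from each of its two ends. *)
Lemma sum_inner_edges A (h : pt n -> R) :
  \sum_(x <- A) \sum_(d : 'I_n * bool) (step x d \in A)%:R * h (step x d) =
  \sum_(x <- A) \sum_(d : 'I_n * bool) (step x d \in A)%:R * h x.
Proof.
have pick x (F : pt n -> R) : \sum_(d : 'I_n * bool) (step x d \in A)%:R * F (step x d) =
    \sum_(y <- A) \sum_(d : 'I_n * bool) (y == step x d)%:R * F y.
  by rewrite exchange_big; apply: eq_bigr => d _; rewrite sumr_delta_uniq ?fset_uniq.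
under eq_bigr => x _ do rewrite pick.
under [RHS]eq_bigr => x _ do rewrite (pick x (fun=> h x)).
rewrite exchange_big /=; apply: eq_bigr => y _; apply: eq_bigr => x _.
rewrite (reindex_inj (inv_inj (@flipK n))) /=; apply: eq_bigr => d _.
by rewrite eq_step_flip flipK.
Qed.

Lemma sum_lap_outflow A u : \sum_(x <- A) lap u x = \sum_(x <- A) outflow A u x.
Proof.
have inner0 : \sum_(x <- A) \sum_(d : 'I_n * bool) (step x d \in A)%:R * (u (step x d) - u x) = 0.
  under eq_bigr => x _ do under eq_bigr => d _ do rewrite mulrBr.
  under eq_bigr => x _ do rewrite sumrB.
  by rewrite sumrB sum_inner_edges subrr.
transitivity (\sum_(x <- A) (\sum_(d : 'I_n * bool) (step x d \in A)%:R * (u (step x d) - u x)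
                             + outflow A u x)); last by rewrite big_split /= inner0 add0r.
apply: eq_bigr => x _; rewrite lapE -big_split /=; apply: eq_bigr => d _.
by case: (step x d \in A); rewrite /= ?mul1r ?mul0r ?add0r ?addr0.
Qed.

Section OutflowLowerBound.
Variables (A : {fset pt n}) (u : pt n -> R) (x : pt n).
Hypothesis exit_up : forall d, step x d \notin A -> u x <= u (step x d).

Lemma outflow_term_ge0 d : 0 <= (step x d \notin A)%:R * (u (step x d) - u x).
Proof.
by case: (boolP (step x d \notin A)) => [/exit_up|_]; rewrite ?mul1r ?subr_ge0 ?mul0r.
Qed.

Lemma outflow_ge0 : 0 <= outflow A u x.
Proof. by apply: sumr_ge0 => d _; apply: outflow_term_ge0. Qed.

Lemma outflow_ge_term d : (step x d \notin A)%:R * (u (step x d) - u x) <= outflow A u x.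
Proof.
by rewrite /outflow (bigD1 d) //= lerDl; apply: sumr_ge0 => d' _; apply: outflow_term_ge0.
Qed.

End OutflowLowerBound.

End GraphLaplacian.

Section Nonlinearity.
Variable R : realType.
Implicit Types lam s t : R.

Definition nonlin lam t : R := lam * expR t * (expR t - 1).

Lemma nonlin_le0 lam t : 0 <= lam -> t <= 0 -> nonlin lam t <= 0.
Proof.
move=> lam_ge0 t_le0; have e_le1 : expR t <= 1 by rewrite expR_le1.
by rewrite /nonlin -mulrA; apply: mulr_ge0_le0 => //; have := expR_gt0 t; nra.
Qed.

Lemma nonlin_gt0 lam t : 0 < lam -> 0 < t -> 0 < nonlin lam t.
Proof.
move=> lam_gt0 t_gt0; have e_gt1 : 1 < expR t by rewrite -expR0 ltr_expR.
by rewrite /nonlin -mulrA; apply: mulr_gt0 => //; nra.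
Qed.

(* [nonlin lam t - nonlin lam s = lam (e^t - e^s) (e^t + e^s - 1)], [0 <= e^t - e^s <= t - s]. *)
Lemma nonlin_subr_le lam s t :
  0 <= lam -> s <= t -> t <= 0 -> nonlin lam t - nonlin lam s <= lam * (t - s).
Proof.
move=> lam_ge0 le_st t_le0; rewrite /nonlin.
have et_le1 : expR t <= 1 by rewrite expR_le1.
have es_gt0 := expR_gt0 s.
have es_le : expR s <= expR t by rewrite ler_expR.
have convex := expR_ge1Dx (s - t).
have split_s : expR (s - t) * expR t = expR s by rewrite -expRD subrK.
have de_le : expR t - expR s <= t - s by nra.
have : (expR t - expR s) * (expR t + expR s - 1) <= expR t - expR s by nra.
nra.
Qed.

(* With [E = e^t]: [E (1 - t) <= 1] gives [E (1 - E) >= - t E^2 >= - t e^-4]. *)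
Lemma nonlin_lower lam t :
  0 < lam -> -2 <= t -> t <= 0 -> - t <= expR 4 / lam * - nonlin lam t.
Proof.
move=> lam_gt0 t_ge t_le0; rewrite /nonlin.
set E := expR t.
have E_le1 : E <= 1 by rewrite /E expR_le1.
have E_gt0 : 0 < E := expR_gt0 t.
have convex := expR_ge1Dx (- t).
have EN : E * expR (- t) = 1 by rewrite /E -expRD subrr expR0.
have E2_ge : expR (-4) <= E * E by rewrite /E -expRD ler_expR; lra.
have e4N : expR 4 * expR (-4) = 1 :> R by rewrite -expRD subrr expR0.
have e4_gt0 : 0 < expR 4 :> R := expR_gt0 4.
have eN4_gt0 : 0 < expR (-4) :> R := expR_gt0 (-4).
have key : - t * expR (-4) <= E * (1 - E) by nra.
have -> : expR 4 / lam * - (lam * E * (E - 1)) = expR 4 * (E * (1 - E)) by field; lra.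
by have := ler_wpM2l (ltW e4_gt0) key; rewrite mulrCA e4N mulr1.
Qed.

End Nonlinearity.

Section BoundaryValueProblem.
Variables (R : realType) (n : nat) (lam C : R) (g : pt n -> R) (Om : {fset pt n}).
Hypotheses (lam_gt0 : 0 < lam) (g_ge0 : forall x, 0 <= g x)
  (g_mass : forall A : {fset pt n}, \sum_(x <- A) g x <= C).
Implicit Types (u v w : pt n -> R) (x y : pt n) (A : {fset pt n}).

Definition bvp u : Prop :=
  (forall x, x \in Om -> lap u x = nonlin lam (u x) + g x) /\ (forall y, vbdry Om y -> u y = 0).

Lemma mass_ge0 : 0 <= C.
Proof. by have := g_mass fset0; rewrite big_seq_fset0. Qed.

Lemma g_le_mass x : g x <= C.
Proof. by have := g_mass [fset x]%fset; rewrite big_seq_fset1. Qed.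

Lemma bvp_exit u x d : bvp u -> x \in Om -> step x d \notin Om -> u (step x d) = 0.
Proof. by case=> _ u_bd xOm sOm; apply: u_bd; split=> //; exists x => //; apply: adj_step. Qed.

Lemma bvp_flux u A : bvp u -> {subset A <= Om} ->
  \sum_(x <- A) outflow A u x = \sum_(x <- A) (nonlin lam (u x) + g x).
Proof. by case=> u_eq _ AOm; rewrite -sum_lap_outflow; apply: eq_big_seq => x /AOm /u_eq. Qed.

(* Maximum principle: on the set where [u > 0] the outflow is [<= 0] but [nonlin lam u + g > 0]. *)
Lemma bvp_le0 u x : bvp u -> x \in Om -> u x <= 0.
Proof.
move=> u_bvp xOm; rewrite leNgt; apply/negP => ux_gt0.
set A := [fset y in Om | 0 < u y]%fset.
have AOm : {subset A <= Om} by move=> y; rewrite !inE => /andP[].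
have out_le0 : \sum_(y <- A) outflow A u y <= 0.
  rewrite big_seq; apply: sumr_le0 => y; rewrite !inE => /andP[yOm uy_gt0].
  apply: sumr_le0 => d _; case: (boolP (step y d \in A)) => [_|sA]; first by rewrite mul0r.
  suff: u (step y d) <= 0 by rewrite mul1r; lra.
  case: (boolP (step y d \in Om)) => [sOm|sOm]; last by rewrite (bvp_exit u_bvp yOm sOm).
  by move: sA; rewrite !inE sOm /= -leNgt.
have : 0 < \sum_(y <- A) (nonlin lam (u y) + g y).
  apply: (lt_le_trans _ (sumr_ge_term (F := fun y => nonlin lam (u y) + g y) (z := x) _ _)).
  - by have := nonlin_gt0 lam_gt0 ux_gt0; have := g_ge0 x; lra.
  - by rewrite !inE xOm.
  by move=> y; rewrite !inE => /andP[_ uy_gt0]; rewrite addr_ge0 // ltW ?nonlin_gt0.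
by rewrite -bvp_flux //; lra.
Qed.

Lemma relax_den_gt0 : 0 < 2 * n%:R + lam.
Proof. by rewrite ltr_wpDl // mulr_ge0. Qed.

Definition relax u x : R :=
  if x \in Om then u x + (lap u x - (nonlin lam (u x) + g x)) / (2 * n%:R + lam) else 0.

Lemma relax_le u w :
  (forall x, u x <= w x) -> (forall x, w x <= 0) -> forall x, relax u x <= relax w x.
Proof.
move=> le_uw w_le0 x; rewrite /relax; case: ifP => // _.
have jacobi v : v x + (lap v x - (nonlin lam (v x) + g x)) / (2 * n%:R + lam) =
    (\sum_(d : 'I_n * bool) v (step x d) + (lam * v x - nonlin lam (v x)) - g x)
      / (2 * n%:R + lam).
  by rewrite lap_nb; field; rewrite gt_eqF ?relax_den_gt0.
rewrite !jacobi ler_pM2r ?invr_gt0 ?relax_den_gt0 // lerD2r lerD //.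
  by apply: ler_sum => d _.
by have := nonlin_subr_le (ltW lam_gt0) (le_uw x) (w_le0 x); have := le_uw x; nra.
Qed.

Lemma relax_le0 u : (forall x, u x <= 0) -> forall x, relax u x <= 0.
Proof.
move=> u_le0 x; apply: le_trans (relax_le u_le0 (fun=> lexx 0) x) _.
rewrite /relax; case: ifP => // _.
rewrite /lap big1 => [|i _]; last by rewrite !subrr addr0.
rewrite /nonlin expR0 subrr mulr0 add0r sub0r add0r mulNr oppr_le0.
by rewrite divr_ge0 ?g_ge0 ?ltW ?relax_den_gt0.
Qed.

Lemma relax_subr u x : x \in Om ->
  relax u x - u x = (lap u x - (nonlin lam (u x) + g x)) / (2 * n%:R + lam).
Proof. by move=> xOm; rewrite /relax xOm addrC addKr. Qed.

Lemma le_relax u x : x \in Om -> (u x <= relax u x) = (nonlin lam (u x) + g x <= lap u x).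
Proof.
move=> xOm; rewrite -subr_ge0 relax_subr // pmulr_lge0 ?subr_ge0 //.
by rewrite invr_gt0 relax_den_gt0.
Qed.

Lemma relax_fixed_bvp u : (forall x, relax u x = u x) -> bvp u.
Proof.
move=> u_fixed; split=> [x xOm|y [yOm _]]; last by rewrite -u_fixed /relax (negbTE yOm).
apply/eqP; rewrite -subr_eq0; have := relax_subr u xOm.
rewrite u_fixed subrr => /esym /eqP; rewrite mulf_eq0 invr_eq0.
by rewrite (gt_eqF relax_den_gt0) orbF.
Qed.

Definition subsol u : Prop := (forall x, u x <= 0) /\ (forall x, u x <= relax u x).

Lemma bvp_trunc_subsol v : bvp v -> subsol (fun y => if y \in Om then v y else 0).
Proof.
move=> v_bvp; set v' := fun y => _.
split=> x; first by rewrite /v'; case: ifP => // /(bvp_le0 v_bvp).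
case: (boolP (x \in Om)) => [xOm|xOm]; last by rewrite /relax /v' !(negbTE xOm).
have vx : v' x = v x by rewrite /v' xOm.
rewrite le_relax // vx -v_bvp.1 //; apply: ler_lap => // d.
rewrite /v'; case: (boolP (step x d \in Om)) => // sOm.
by rewrite (bvp_exit v_bvp xOm sOm).
Qed.

Section Barrier.
Variable i0 : 'I_n.

Let rho : R := \sum_(y <- Om) `|(y i0)%:~R|.

Let rho_ge0 : 0 <= rho. Proof. by apply: sumr_ge0. Qed.

Definition quad x : R := C * (((x i0)%:~R) ^+ 2 - (rho + 1) ^+ 2).

(* [lap quad = 2 C >= g], and [quad <= 0] within distance [1] of [Om], so truncating [quad] to
   [0] off [Om] only raises the neighbours of points of [Om]. *)
Definition barrier x : R := if x \in Om then quad x else 0.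

Lemma lap_quad x : lap quad x = 2 * C.
Proof.
rewrite /lap (bigD1 i0) //= big1 ?addr0 => [|i /negbTE i0i]; last first.
  by rewrite /quad !ffunE eq_sym i0i !subrr addr0.
by rewrite /quad !ffunE eqxx !intrD; set a : R := (x i0)%:~R; lra.
Qed.

Lemma quad_le0 x : `|(x i0)%:~R| <= rho + 1 -> quad x <= 0.
Proof.
move=> x_le; rewrite /quad mulr_ge0_le0 ?mass_ge0 // subr_le0.
by rewrite -real_normK ?num_real // lerXn2r ?nnegrE ?addr_ge0.
Qed.

Lemma coord_le_rho x : x \in Om -> `|(x i0)%:~R| <= rho.
Proof. by move=> xOm; apply: (sumr_ge_term (F := fun y : pt n => `|(y i0)%:~R|)). Qed.

Lemma barrier_subsol : subsol barrier.
Proof.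
have barrier_in x : x \in Om -> barrier x = quad x by rewrite /barrier => ->.
split=> x; case: (boolP (x \in Om)) => xOm; last 1 first.
- by rewrite /relax /barrier (negbTE xOm).
- by rewrite barrier_in //; apply: quad_le0; have := coord_le_rho xOm; lra.
- by rewrite /barrier (negbTE xOm).
have quad_le : lap quad x <= lap barrier x.
  apply: ler_lap => [|d]; first by rewrite barrier_in.
  rewrite /barrier; case: ifP => // _; apply: quad_le0.
  rewrite /step ffunE; case: eqP => _; last by have := coord_le_rho xOm; lra.
  rewrite intrD; apply: le_trans (ler_normD _ _) _; apply: lerD; first exact: coord_le_rho.
  by case: d.2; rewrite ?normrN normr1.
rewrite le_relax // barrier_in //; apply: le_trans quad_le; rewrite lap_quad.
have qx_le0 : quad x <= 0 by apply: quad_le0; have := coord_le_rho xOm; lra.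
have := nonlin_le0 (ltW lam_gt0) qx_le0; have := g_le_mass x; have := mass_ge0; lra.
Qed.

End Barrier.

Definition maxsol x : R := sup (fun r => exists2 u, subsol u & r = u x).

Section MaximalSolution.
Variable i0 : 'I_n.

Let subsol_value x : exists r, exists2 u, subsol u & r = u x.
Proof. by exists (barrier i0 x), (barrier i0); first exact: barrier_subsol. Qed.

Lemma subsol_le_maxsol u : subsol u -> forall x, u x <= maxsol x.
Proof.
move=> u_sub x; apply: sup_upper_bound; last by exists u.
by split; [exact: subsol_value | exists 0 => _ [w [w_le0 _] ->]].
Qed.

Lemma maxsol_le0 x : maxsol x <= 0.
Proof. by apply: ge_sup => [|_ [w [w_le0 _] ->]]; first exact: subsol_value. Qed.

Lemma maxsol_fixed x : relax maxsol x = maxsol x.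
Proof.
have le_relax y : maxsol y <= relax maxsol y.
  apply: ge_sup => [|_ [u [u_le0 u_sub] ->]]; first exact: subsol_value.
  apply: le_trans (u_sub y) (relax_le _ maxsol_le0 y) => z.
  by apply: subsol_le_maxsol.
apply/le_anti; rewrite le_relax andbT; apply: subsol_le_maxsol.
by split; [exact: relax_le0 maxsol_le0 | exact: relax_le le_relax (relax_le0 maxsol_le0)].
Qed.

Lemma maxsol_bvp : bvp maxsol.
Proof. exact: relax_fixed_bvp maxsol_fixed. Qed.

Lemma maxsol_out x : x \notin Om -> maxsol x = 0.
Proof. by move=> xOm; rewrite -maxsol_fixed /relax (negbTE xOm). Qed.

Lemma bvp_le_maxsol v x : bvp v -> vclos Om x -> v x <= maxsol x.
Proof.
move=> v_bvp [xOm|x_bd]; last by rewrite (v_bvp.2 x x_bd) (maxsol_bvp.2 x x_bd).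
by have := subsol_le_maxsol (bvp_trunc_subsol v_bvp) x; rewrite xOm.
Qed.

End MaximalSolution.

Let kappa : R := expR 4 / lam.

Let kappa_ge0 : 0 <= kappa. Proof. by rewrite divr_ge0 // ltW ?expR_gt0. Qed.

Let perim_bound : R := (1 + 2 * n%:R * kappa) * C.

Section SolutionBounds.
Variable u : pt n -> R.
Hypotheses (u_bvp : bvp u) (u_out : forall x, x \notin Om -> u x = 0).

Lemma sol_le0 x : u x <= 0.
Proof. by case: (boolP (x \in Om)) => [/(bvp_le0 u_bvp)|/u_out ->]. Qed.

Lemma nonlin_sol_le0 x : nonlin lam (u x) <= 0.
Proof. exact: nonlin_le0 (ltW lam_gt0) (sol_le0 x). Qed.

Lemma sum_outflow_nonlin_le A : {subset A <= Om} ->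
  \sum_(x <- A) (outflow A u x - nonlin lam (u x)) <= C.
Proof.
move=> AOm; apply: le_trans (g_mass A).
by rewrite sumrB (bvp_flux u_bvp AOm) big_split /= addrAC subrr add0r.
Qed.

Lemma sum_oppr_nonlin_le : \sum_(x <- Om) - nonlin lam (u x) <= C.
Proof.
apply: le_trans (sum_outflow_nonlin_le (fun x xOm => xOm)).
rewrite big_seq [leRHS]big_seq; apply: ler_sum => x xOm; rewrite lerDr.
by apply: outflow_ge0 => d sOm; rewrite (bvp_exit u_bvp xOm sOm) sol_le0.
Qed.

Definition sublevel t := [fset x in Om | u x < t]%fset.

Lemma sublevel_sub t : {subset sublevel t <= Om}.
Proof. by move=> x; rewrite !inE => /andP[]. Qed.

Lemma notin_sublevel t x : t <= 0 -> x \notin sublevel t -> t <= u x.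
Proof. by move=> t_le0; rewrite !inE negb_and -leNgt => /orP[/u_out ->|]. Qed.

Lemma sublevel_exit_up t x d :
  t <= 0 -> x \in sublevel t -> step x d \notin sublevel t -> u x <= u (step x d).
Proof.
move=> t_le0 + /(notin_sublevel t_le0); rewrite !inE => /andP[_ ux_lt] t_le.
by rewrite ltW // (lt_le_trans ux_lt).
Qed.

(* Apply the flux bound to the sublevel set below [u (step y d)], which [step y d] exits. *)
Lemma step_sub_le y d : y \in Om -> u (step y d) - u y <= C.
Proof.
move=> yOm; set z := step y d.
have [|uy_lt] := leP (u z) (u y); first by have := mass_ge0; lra.
set A := sublevel (u z).
have exit_up x : x \in A -> forall d', step x d' \notin A -> u x <= u (step x d').
  by move=> xA d'; apply: sublevel_exit_up (sol_le0 z) xA.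
have yA : y \in A by rewrite !inE yOm.
have zA : z \notin A by rewrite !inE ltxx andbF.
have := outflow_ge_term (exit_up y yA) d; rewrite zA mul1r => /le_trans; apply.
apply: le_trans (sum_outflow_nonlin_le (@sublevel_sub _)).
apply: le_trans (sumr_ge_term (F := fun x => outflow A u x - nonlin lam (u x)) yA _).
  by rewrite lerDl oppr_ge0 nonlin_sol_le0.
by move=> x xA; rewrite addr_ge0 ?oppr_ge0 ?nonlin_sol_le0 ?outflow_ge0 //; apply: exit_up.
Qed.

(* Walk from [x] along a coordinate ray until leaving [{u < -1}]: at most [size] steps, each
   raising [u] by at most [C]. *)
Lemma depth_le (i : 'I_n) x : x \in sublevel (-1) -> - u x <= 1 + C * (size (sublevel (-1)))%:R.
Proof.
move=> xS; set S := sublevel (-1).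
have [K [K_le KS inS]] := ray_exit S x i.
have climb k : (k <= K)%N -> u (shift x i k%:Z) - u x <= k%:R * C.
  elim: k => [_|k IH lt_kK]; first by rewrite shift0 subrr mul0r.
  have -> : shift x i k.+1%:Z = step (shift x i k%:Z) (i, true).
    by rewrite /step /= shiftD intS addrC.
  have := step_sub_le (i, true) (sublevel_sub (inS k lt_kK)).
  by have := IH (ltnW lt_kK); rewrite -addn1 natrD; lra.
have := climb K (leqnn K); have := notin_sublevel (lerN10 R) KS.
have : K%:R * C <= (size S)%:R * C by rewrite ler_wpM2r ?mass_ge0 ?ler_nat.
lra.
Qed.

Lemma perimeter_sublevel_le : (perimeter (sublevel (-1)))%:R <= perim_bound.
Proof.
set S := sublevel (-1).
have mf_ge0 x : 0 <= - nonlin lam (u x) by rewrite oppr_ge0 nonlin_sol_le0.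
have exit_up x : x \in S -> forall d, step x d \notin S -> u x <= u (step x d).
  by move=> xS d; apply: sublevel_exit_up xS; apply: lerN10.
(* A boundary edge leaving [x] either has a jump [>= 1] or [-2 < u x < -1], where
   [1 <= - u x <= kappa * - nonlin lam (u x)]. *)
have edge x d : x \in S -> ((step x d \notin S) : nat)%:R <=
    (step x d \notin S)%:R * (u (step x d) - u x) + kappa * - nonlin lam (u x).
  move=> xS; have kf_ge0 := mulr_ge0 kappa_ge0 (mf_ge0 x).
  have ux_lt : u x < -1 by move: xS; rewrite !inE => /andP[].
  case: (boolP (step x d \notin S)) => /= sS; last by rewrite mul0r add0r.
  have us_ge := notin_sublevel (lerN10 R) sS; rewrite mul1r.
  have [ux_le|ux_gt] := leP (u x) (-2); first lra.
  by have := nonlin_lower lam_gt0 (ltW ux_gt) (sol_le0 x); rewrite -/kappa; lra.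
have per_le : (perimeter S)%:R <= \sum_(x <- S) outflow S u x
                                   + 2 * n%:R * kappa * \sum_(x <- S) - nonlin lam (u x).
  rewrite /perimeter natr_sum mulr_sumr -big_split /= big_seq [leRHS]big_seq.
  apply: ler_sum => x xS; rewrite natr_sum -mulrA -sum_dirs_const -big_split /=.
  by apply: ler_sum => d _; apply: edge.
apply: le_trans per_le _.
have O_ge0 : 0 <= \sum_(x <- S) outflow S u x.
  by rewrite big_seq; apply: sumr_ge0 => x xS; apply: outflow_ge0; apply: exit_up.
have F_ge0 : 0 <= \sum_(x <- S) - nonlin lam (u x) by apply: sumr_ge0.
have := sum_outflow_nonlin_le (@sublevel_sub (-1)); rewrite big_split /= -/S.
have : 0 <= 2 * n%:R * kappa by rewrite mulr_ge0 // mulr_ge0.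
rewrite /perim_bound; nra.
Qed.

(* Off [{u < -1}] we have [u^2 <= - u <= kappa * - nonlin lam u]; on it [|u|] is at most the
   depth bound, and its size is controlled by its perimeter. *)
Lemma sum_sqr_le : (1 < n)%N ->
  \sum_(x <- Om) u x ^+ 2 <= kappa * C + perim_bound ^+ 2 * (1 + C * perim_bound ^+ 2) ^+ 2.
Proof.
move=> n_gt1; set P := perim_bound; set S := sublevel (-1); set D := 1 + C * (size S)%:R.
have C_ge0 := mass_ge0.
have size_le : (size S)%:R <= P ^+ 2.
  have per_ge0 : 0 <= (perimeter S)%:R :> R := ler0n R _.
  apply: (le_trans (_ : _ <= (perimeter S)%:R ^+ 2)).
    by rewrite -natrX ler_nat size_le_perimeter_sqr.
  by rewrite lerXn2r ?nnegrE ?perimeter_sublevel_le // (le_trans per_ge0 perimeter_sublevel_le).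
have D_ge0 : 0 <= D by rewrite addr_ge0 ?mulr_ge0.
have D_le : D <= 1 + C * P ^+ 2 by rewrite lerD2l ler_wpM2l.
have pointwise x : x \in Om -> u x ^+ 2 <= kappa * - nonlin lam (u x) + (x \in S)%:R * D ^+ 2.
  move=> xOm; have ux_le0 := sol_le0 x.
  have kf_ge0 : 0 <= kappa * - nonlin lam (u x) by rewrite mulr_ge0 ?oppr_ge0 ?nonlin_sol_le0.
  case: (boolP (x \in S)) => /= xS; rewrite ?mul1r ?mul0r ?addr0.
    by have := depth_le (Ordinal (ltnW n_gt1)) xS; rewrite -/S -/D; nra.
  have ux_ge := notin_sublevel (lerN10 R) xS.
  have ux_ge2 : -2 <= u x by lra.
  by have := nonlin_lower lam_gt0 ux_ge2 ux_le0; rewrite -/kappa; nra.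
have S_Om : (S `<=` Om)%fset by apply/fsubsetP => x; apply: sublevel_sub.
have sum_S : \sum_(x <- Om) (x \in S)%:R * D ^+ 2 = (size S)%:R * D ^+ 2.
  rewrite -(big_fset_incl _ S_Om) => [|x _ /negbTE ->]; last by rewrite mul0r.
  rewrite -sum1_size natr_sum mulr_suml big_seq [RHS]big_seq.
  by apply: eq_bigr => x ->; rewrite !mul1r.
apply: (le_trans (_ : _ <= \sum_(x <- Om) (kappa * - nonlin lam (u x) + (x \in S)%:R * D ^+ 2))).
  by rewrite big_seq [leRHS]big_seq; apply: ler_sum => x /pointwise.
rewrite big_split /= -mulr_sumr sum_S; apply: lerD; first by rewrite ler_wpM2l ?sum_oppr_nonlin_le.
by rewrite ler_pM ?sqr_ge0 // lerXn2r ?nnegrE // (le_trans D_ge0 D_le).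
Qed.

End SolutionBounds.

End BoundaryValueProblem.

Section PointSources.
Variables (R : realType) (n M : nat) (p : 'I_M -> pt n) (nj : 'I_M -> nat).

Definition source x : R := 4 * pi * \sum_(j < M) (nj j)%:R * dirac (p j) x.

Lemma dirac_ge0 (q x : pt n) : 0 <= dirac q x :> R.
Proof. by rewrite /dirac; case: eqP. Qed.

Lemma sum_dirac_le (A : {fset pt n}) (q : pt n) : \sum_(x <- A) dirac q x <= 1 :> R.
Proof.
have -> : \sum_(x <- A) dirac q x = \sum_(x <- A) (x == q)%:R * 1 :> R.
  by apply: eq_bigr => x _; rewrite /dirac mulr1; case: eqP.
by rewrite sumr_delta_uniq ?fset_uniq // mulr1; case: (q \in A).
Qed.

Lemma source_ge0 x : 0 <= source x.
Proof.
rewrite /source mulr_ge0 ?mulr_ge0 ?pi_ge0 //.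
by apply: sumr_ge0 => j _; rewrite mulr_ge0 ?dirac_ge0.
Qed.

Lemma sum_source_le (A : {fset pt n}) :
  \sum_(x <- A) source x <= 4 * pi * \sum_(j < M) (nj j)%:R.
Proof.
rewrite /source -mulr_sumr ler_wpM2l ?mulr_ge0 ?pi_ge0 // exchange_big /=.
by apply: ler_sum => j _; rewrite -mulr_sumr ler_piMr ?sum_dirac_le.
Qed.

End PointSources.

Arguments source {R n M}.

Unset Implicit Arguments.

Theorem lemma3p4 (R : realType) (n : nat) (hn : (2 <= n)%N) (lam : R) (hlam : 0 < lam)
  (C : R) :
  exists C0 : R,
  forall (M : nat) (p : 'I_M -> pt n) (nj : 'I_M -> nat),
    injective p ->
    (forall j, (0 < nj j)%N) ->
    C = 4 * pi * \sum_(j < M) (nj j)%:R ->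
    forall Om0 : {fset pt n}, (forall j, p j \in Om0) ->
    forall Om : {fset pt n}, fsubset Om0 Om ->
    exists u : pt n -> R,
      [/\ solves lam p nj Om u,
          (forall v : pt n -> R, solves lam p nj Om v ->
             forall x, vclos Om x -> v x <= u x)
        & l2norm Om u <= C0].
Proof.
pose P := (1 + 2 * n%:R * (expR 4 / lam)) * C.
exists (Num.sqrt (expR 4 / lam * C + P ^+ 2 * (1 + C * P ^+ 2) ^+ 2)).
move=> M p nj _ _ defC Om0 _ Om _.
pose i0 : 'I_n := Ordinal (ltnW hn).
have mass (A : {fset pt n}) : \sum_(x <- A) source p nj x <= C by rewrite defC sum_source_le.
have g_ge0 := source_ge0 R p nj.
have u_bvp := maxsol_bvp Om hlam g_ge0 mass i0.
exists (maxsol lam (source p nj) Om); split=> //.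
  by move=> v v_bvp x; apply: (bvp_le_maxsol hlam g_ge0 mass i0).
have C_ge0 := mass_ge0 mass.
have kappa_ge0 : 0 <= expR 4 / lam by rewrite divr_ge0 // ltW ?expR_gt0.
have u_out x : x \notin Om -> maxsol lam (source p nj) Om x = 0.
  exact: maxsol_out hlam g_ge0 mass i0 x.
rewrite /l2norm ler_sqrt; first exact: (sum_sqr_le hlam g_ge0 mass u_bvp u_out).
by apply: addr_ge0; apply: mulr_ge0; rewrite ?sqr_ge0.
Qed.
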